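(* Let $S$ be a finite alphabet, $X = S^{\mathbb{Z}}$ the full shift, and $f : X \to X$ a cellular automaton. Then the language of the nonwandering set $\mathcal{N}(f)$ is a $\Sigma^1_1$ set.
   Context: A cellular automaton on $X = S^{\mathbb{Z}}$ (product topology) is a continuous shift-commuting map $f: X \to X$. The nonwandering set of $f$ is $\mathcal{N}(f) = \{x \in X \mid x \in \bigcap_{n \in \mathbb{N}} \overline{\bigcup_{k \geq n} \{f^k(x)\}}\}$, i.e. the set of configurations that are limit points of their own orbit. The language of $Y \subseteq S^{\mathbb{Z}}$ is the set of words $w \in S^*$ with $w = y_{[0,k-1]}$ for some $y\in Y$, $k \in \mathbb{N}$, viewed as a subset of $\mathbb{N}$ via a computable bijection. A set $P \subseteq \mathbb{N}$ is $\Sigma^1_1$ if $w \in P \iff (\exists C \subseteq \mathbb{N})(\forall m \in \mathbb{N})(\exists \ell \in \mathbb{N}) R(C,m,\ell,w)$ for some recursive predicate $R$. *)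

From mathcomp Require Import all_boot.
From Stdlib Require Import ZArith.
Local Open Scope nat_scope.
Set Implicit Arguments. Unset Strict Implicit. Unset Printing Implicit Defensive.

Definition config (S : Type) := Z -> S.

Definition shift (S : Type) (x : config S) : config S := fun i => x (i + 1)%Z.

(* x and y agree on the window [-r, r]; the sets {y | agree x y r} form a
   neighbourhood base of x in the product topology of discrete spaces S *)
Definition agree (S : Type) (x y : config S) (r : nat) : Prop :=
  forall i : Z, (- Z.of_nat r <= i <= Z.of_nat r)%Z -> x i = y i.

(* continuity of f : X -> X for the product topology (S discrete):
   every coordinate of the image depends continuously on x, i.e. for each
   x and i there is a basic neighbourhood of x on which (f .) i is constant *)
Definition prod_continuous (S : Type) (f : config S -> config S) : Prop :=
  forall (x : config S) (i : Z), exists r : nat,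
    forall y : config S, agree x y r -> f y i = f x i.

Definition cellular_automaton (S : Type) (f : config S -> config S) : Prop :=
  prod_continuous f /\
  (forall (x : config S) (i : Z), f (shift x) i = shift (f x) i).

(* nonwandering set: x lies in the closure of {f^k x | k >= n} for every n;
   closure in the product topology, via the basic neighbourhoods agree x _ r *)
Definition nonwandering (S : Type) (f : config S -> config S) (x : config S)
  : Prop :=
  forall n r : nat, exists k : nat, (n <= k)%nat /\ agree x (ssrnat.iter k f x) r.

Definition language (S : Type) (Y : config S -> Prop) (w : seq S) : Prop :=
  exists y : config S, Y y /\ w = [seq y (Z.of_nat j) | j <- iota 0 (size w)].

(* computable bijection S^* -> N (bijective base-#|S| numeration):
   code [::] = 0, code (a :: w) = (rank a + 1) + #|S| * code w *)
Definition word_code (S : finType) (w : seq S) : nat :=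
  foldr (fun a n => (enum_rank a).+1 + #|S| * n) 0 w.

(* syntax of partial recursive functions with an oracle C : N -> bool *)
Inductive code : Type :=
| Zero
| Succ
| Proj of nat
| Orac
| Comp of code & seq code
| Prec of code & code
| Mu of code.

(* big-step semantics relative to an oracle C; missing arguments read as 0 *)
Inductive eval (C : nat -> bool) : code -> seq nat -> nat -> Prop :=
| ev_zero xs : eval C Zero xs 0
| ev_succ xs : eval C Succ xs (nth 0 xs 0).+1
| ev_proj i xs : eval C (Proj i) xs (nth 0 xs i)
| ev_orac xs : eval C Orac xs (nat_of_bool (C (nth 0 xs 0)))
| ev_comp g hs xs ys y :
    evals C hs xs ys -> eval C g ys y -> eval C (Comp g hs) xs y
| ev_prec0 g h xs y : eval C g xs y -> eval C (Prec g h) (0 :: xs) y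
| ev_precS g h n xs z y :
    eval C (Prec g h) (n :: xs) z -> eval C h (n :: z :: xs) y ->
    eval C (Prec g h) (n.+1 :: xs) y
| ev_mu g xs n :
    eval C g (n :: xs) 0 ->
    (forall k : nat, (k < n)%nat -> exists v : nat, v <> 0 /\ eval C g (k :: xs) v) ->
    eval C (Mu g) xs n
with evals (C : nat -> bool) : seq code -> seq nat -> seq nat -> Prop :=
| evs_nil xs : evals C [::] xs [::]
| evs_cons h hs xs y ys :
    eval C h xs y -> evals C hs xs ys -> evals C (h :: hs) xs (y :: ys).

Definition recursive_pred
  (R : (nat -> bool) -> nat -> nat -> nat -> Prop) : Prop :=
  exists e : code, forall (C : nat -> bool) (m l w : nat),
    (R C m l w -> eval C e [:: m; l; w] 1) /\
    (~ R C m l w -> eval C e [:: m; l; w] 0).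

Definition Sigma11 (P : nat -> Prop) : Prop :=
  exists R : (nat -> bool) -> nat -> nat -> nat -> Prop,
    recursive_pred R /\
    forall w : nat,
      P w <-> exists C : nat -> bool, forall m : nat, exists l : nat, R C m l w.

(* A cellular automaton is uniformly continuous (S^Z is compact), hence given by a
   local rule of some radius rho.  A word w is in the language of the nonwandering set
   iff some oracle C describes the space-time diagram of a configuration y whose row 0
   starts with w, obeying the local rule, together with, for every n and r, a time
   k >= n at which the orbit of y is back in the r-window of y.  Each condition on C is
   arithmetic with bounded quantifiers once the return times and the codes of the
   suffixes of w, looked up for arguments below m, are bounded by some l; this gives
   the form "exists C, forall m, exists l, R(C, m, l, w)", and bounded formulas are
   decided by oracle programs. *)

From Pilot Require Import Defs.
From mathcomp Require Import all_boot.
From Stdlib Require Import ZArith Lia.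
From mathcomp Require Import zify.
From Stdlib Require Import Classical ClassicalEpsilon FunctionalExtensionality.
Set Implicit Arguments. Unset Strict Implicit. Unset Printing Implicit Defensive.

(** * Oracle programs *)

Lemma evals1 C h xs y : eval C h xs y -> evals C [:: h] xs [:: y].
Proof. by move=> Hh; apply: evs_cons Hh (evs_nil _ _). Qed.

Lemma evals2 C h1 h2 xs y1 y2 :
  eval C h1 xs y1 -> eval C h2 xs y2 -> evals C [:: h1; h2] xs [:: y1; y2].
Proof. by move=> H1 H2; apply: evs_cons H1 (evals1 H2). Qed.

Fixpoint const_code (n : nat) : code :=
  if n is n'.+1 then Comp Succ [:: const_code n'] else Zero.

Lemma eval_const_code C n xs : eval C (const_code n) xs n.
Proof.
elim: n => [|n IHn]; first exact: ev_zero.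
exact: ev_comp (evals1 IHn) (ev_succ C [:: n]).
Qed.

Definition add_code : code := Defs.Prec (Proj 0) (Comp Succ [:: Proj 1]).

Lemma eval_add_code C m n : eval C add_code [:: m; n] (m + n).
Proof.
elim: m => [|m IHm]; first exact: (ev_prec0 _ (ev_proj C 0 [:: n])).
apply: (ev_precS IHm).
exact: ev_comp (evals1 (ev_proj C 1 [:: m; m + n; n])) (ev_succ C [:: m + n]).
Qed.

Definition mul_code : code := Defs.Prec Zero (Comp add_code [:: Proj 1; Proj 2]).

Lemma eval_mul_code C m n : eval C mul_code [:: m; n] (m * n).
Proof.
elim: m => [|m IHm]; first exact: (ev_prec0 _ (ev_zero C [:: n])).
apply: (ev_precS IHm); rewrite mulSn addnC.
apply: ev_comp (eval_add_code _ _ _).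
exact: evals2 (ev_proj C 1 [:: m; m * n; n]) (ev_proj C 2 [:: m; m * n; n]).
Qed.

Definition pred_code : code := Defs.Prec Zero (Proj 0).

Lemma eval_pred_code C n : eval C pred_code [:: n] n.-1.
Proof.
elim: n => [|n IHn]; first exact: (ev_prec0 _ (ev_zero C [::])).
exact: (ev_precS IHn (ev_proj C 0 [:: n; n.-1])).
Qed.

(* Recursion runs on the first argument, so the subtrahend comes first. *)
Definition rsub_code : code := Defs.Prec (Proj 0) (Comp pred_code [:: Proj 1]).

Lemma eval_rsub_code C n m : eval C rsub_code [:: n; m] (m - n).
Proof.
elim: n => [|n IHn]; first by rewrite subn0; exact: (ev_prec0 _ (ev_proj C 0 [:: m])).
apply: (ev_precS IHn); rewrite subnS.
exact: ev_comp (evals1 (ev_proj C 1 [:: n; m - n; m])) (eval_pred_code _ _).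
Qed.

Definition plus_code (a b : code) := Comp add_code [:: a; b].
Definition times_code (a b : code) := Comp mul_code [:: a; b].
Definition minus_code (a b : code) := Comp rsub_code [:: b; a].
Definition not_code (a : code) := Comp rsub_code [:: a; const_code 1].

Section CodeOperations.
Variables (C : nat -> bool) (a b : code) (xs : seq nat) (x y : nat).
Hypotheses (Ha : eval C a xs x) (Hb : eval C b xs y).

Lemma eval_plus_code : eval C (plus_code a b) xs (x + y).
Proof. exact: ev_comp (evals2 Ha Hb) (eval_add_code _ _ _). Qed.

Lemma eval_times_code : eval C (times_code a b) xs (x * y).
Proof. exact: ev_comp (evals2 Ha Hb) (eval_mul_code _ _ _). Qed.

Lemma eval_minus_code : eval C (minus_code a b) xs (x - y).
Proof. exact: ev_comp (evals2 Hb Ha) (eval_rsub_code _ _ _). Qed.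

Lemma eval_not_code : eval C (not_code a) xs (1 - x).
Proof. exact: ev_comp (evals2 Ha (eval_const_code _ _ _)) (eval_rsub_code _ _ _). Qed.

End CodeOperations.

Lemma evals_proj_iota C s k xs :
  evals C (map Proj (iota s k)) xs (map (nth 0 xs) (iota s k)).
Proof.
elim: k s => [|k IHk] s; first exact: evs_nil.
exact: evs_cons (ev_proj _ _ _) (IHk _).
Qed.

Lemma evals_proj_prefix C ys xs :
  evals C (map Proj (iota (size ys) (size xs))) (ys ++ xs) xs.
Proof.
have E : map (nth 0 (ys ++ xs)) (iota (size ys) (size xs)) = xs.
  by rewrite map_nth_iota ?drop_size_cat ?take_size // size_cat addKn.
by move: (evals_proj_iota C (size ys) (size xs) (ys ++ xs)); rewrite E.
Qed.

(** * Bounded arithmetic formulas *)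

Lemma eval_bounded_all C g e (P : pred nat) :
  (forall x, eval C g (x :: e) (P x)) -> forall n,
  eval C (Defs.Prec (const_code 1)
            (times_code (Proj 1) (Comp g (Proj 0 :: map Proj (iota 2 (size e))))))
    (n :: e) (all P (iota 0 n)).
Proof.
move=> HP; elim=> [|n IHn]; first exact: (ev_prec0 _ (eval_const_code C 1 e)).
apply: (ev_precS IHn).
have -> : nat_of_bool (all P (iota 0 n.+1)) = all P (iota 0 n) * P n.
  by rewrite -addn1 iotaD all_cat /= andbT; case: (all P _); case: (P n).
apply: eval_times_code; first exact: ev_proj.
apply: ev_comp (HP n); apply: evs_cons (ev_proj _ _ _) _.
exact: (evals_proj_prefix C [:: n; nat_of_bool (all P (iota 0 n))] e).
Qed.

Inductive term := TVar of nat | TNat of nat | TAdd of term & term | TMul of term & term.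

(* Variables are de Bruijn indices into an environment [e : seq nat]. *)
Inductive formula :=
| FOracle of term
| FEq of term & term
| FLe of term & term
| FNot of formula
| FAnd of formula & formula
| FAll of term & formula.

Fixpoint term_val (e : seq nat) (t : term) : nat :=
  match t with
  | TVar i => nth 0 e i
  | TNat n => n
  | TAdd a b => term_val e a + term_val e b
  | TMul a b => term_val e a * term_val e b
  end.

Fixpoint holds (C : nat -> bool) (e : seq nat) (p : formula) : bool :=
  match p with
  | FOracle t => C (term_val e t)
  | FEq a b => term_val e a == term_val e b
  | FLe a b => term_val e a <= term_val e b
  | FNot q => ~~ holds C e q
  | FAnd q r => holds C e q && holds C e r
  | FAll t q => all (fun x => holds C (x :: e) q) (iota 0 (term_val e t))
  end.

Fixpoint term_code (t : term) : code :=
  match t with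
  | TVar i => Proj i
  | TNat n => const_code n
  | TAdd a b => plus_code (term_code a) (term_code b)
  | TMul a b => times_code (term_code a) (term_code b)
  end.

Lemma eval_term_code C e t : eval C (term_code t) e (term_val e t).
Proof.
elim: t => [i|n|a Ha b Hb|a Ha b Hb] /=.
- exact: ev_proj.
- exact: eval_const_code.
- exact: eval_plus_code.
- exact: eval_times_code.
Qed.

(* [k] is the length of the environment the formula is evaluated in. *)
Fixpoint formula_code (k : nat) (p : formula) : code :=
  match p with
  | FOracle t => Comp Orac [:: term_code t]
  | FEq a b => not_code (plus_code (minus_code (term_code a) (term_code b))
                                   (minus_code (term_code b) (term_code a)))
  | FLe a b => not_code (minus_code (term_code a) (term_code b))
  | FNot q => not_code (formula_code k q)
  | FAnd q r => times_code (formula_code k q) (formula_code k r)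
  | FAll t q => Comp (Defs.Prec (const_code 1)
        (times_code (Proj 1) (Comp (formula_code k.+1 q) (Proj 0 :: map Proj (iota 2 k)))))
        (term_code t :: map Proj (iota 0 k))
  end.

Lemma nat_of_eqn m n : nat_of_bool (m == n) = 1 - ((m - n) + (n - m)).
Proof. by case: eqVneq => [->|]; [rewrite subnn | lia]. Qed.

Lemma nat_of_leq m n : nat_of_bool (m <= n) = 1 - (m - n).
Proof. by rewrite -subn_eq0; case: (m - n). Qed.

Lemma eval_formula_code C p e : eval C (formula_code (size e) p) e (holds C e p).
Proof.
elim: p e => [t|a b|a b|q IHq|q IHq r IHr|t q IHq] e /=.
- exact: ev_comp (evals1 (eval_term_code C e t)) (ev_orac C [:: _]).
- by rewrite nat_of_eqn; apply/eval_not_code/eval_plus_code; apply: eval_minus_code;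
    exact: eval_term_code.
- by rewrite nat_of_leq; apply/eval_not_code/eval_minus_code; exact: eval_term_code.
- by rewrite (_ : nat_of_bool _ = 1 - holds C e q); [exact: eval_not_code | case: holds].
- by rewrite (_ : nat_of_bool _ = holds C e q * holds C e r);
    [exact: eval_times_code | case: holds; case: holds].
- have Hq x : eval C (formula_code (size e).+1 q) (x :: e) (holds C (x :: e) q).
    exact (IHq (x :: e)).
  apply: ev_comp (eval_bounded_all Hq _).
  exact: evs_cons (eval_term_code _ _ _) (evals_proj_prefix C [::] e).
Qed.

Definition formula_pred (p : formula) (C : nat -> bool) (m l w : nat) : Prop :=
  holds C [:: m; l; w] p.

Lemma formula_pred_recursive p : recursive_pred (formula_pred p).
Proof.
exists (formula_code 3 p) => C m l w; rewrite /formula_pred.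
have := eval_formula_code C p [:: m; l; w].
by case: (holds C _ p) => H; split=> // [[]].
Qed.

Definition FTrue := FEq (TNat 0) (TNat 0).
Definition FOr p q := FNot (FAnd (FNot p) (FNot q)).
Definition FImp p q := FNot (FAnd p (FNot q)).
Definition FIff p q := FAnd (FImp p q) (FImp q p).
Definition FEx t p := FNot (FAll t (FNot p)).
Definition FBigAnd := foldr FAnd FTrue.
Definition FBigOr := foldr FOr (FNot FTrue).

Section Holds.
Variables (C : nat -> bool) (e : seq nat).

Lemma holds_and p q : holds C e (FAnd p q) = holds C e p && holds C e q.
Proof. by []. Qed.

Lemma holds_eq a b : holds C e (FEq a b) = (term_val e a == term_val e b).
Proof. by []. Qed.

Lemma holds_le a b : holds C e (FLe a b) = (term_val e a <= term_val e b).
Proof. by []. Qed.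

Lemma holds_or p q : holds C e (FOr p q) = holds C e p || holds C e q.
Proof. by rewrite /= negb_and !negbK. Qed.

Lemma holds_imp p q : holds C e (FImp p q) = holds C e p ==> holds C e q.
Proof. by rewrite /= negb_and negbK; case: holds. Qed.

Lemma holds_iff p q : holds C e (FIff p q) = (holds C e p == holds C e q).
Proof. by rewrite /= !negb_and !negbK; case: (holds C e p); case: holds. Qed.

Lemma holds_bigand ps : holds C e (FBigAnd ps) = all (holds C e) ps.
Proof. by elim: ps => //= p ps ->. Qed.

Lemma holds_bigor ps : holds C e (FBigOr ps) = has (holds C e) ps.
Proof. by elim: ps => //= p ps <-; rewrite -holds_or. Qed.

Lemma holds_allP t q :
  reflect (forall x, x < term_val e t -> holds C (x :: e) q) (holds C e (FAll t q)).
Proof.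
apply: (iffP allP) => H x; first by move=> Hx; apply: H; rewrite mem_iota.
by rewrite mem_iota => /H.
Qed.

Lemma holds_all_at t q x : holds C e (FAll t q) -> x < term_val e t -> holds C (x :: e) q.
Proof. by move/holds_allP; apply. Qed.

Lemma holds_exP t q :
  reflect (exists2 x, x < term_val e t & holds C (x :: e) q) (holds C e (FEx t q)).
Proof.
rewrite /FEx /= -has_predC; apply: (iffP hasP) => [[x]|[x Hx Hq]].
  by rewrite mem_iota /= negbK => Hx Hq; exists x.
by exists x; rewrite ?mem_iota //= negbK.
Qed.

End Holds.

Lemma holds_bigandP C e (I : eqType) (F : I -> formula) (r : seq I) :
  reflect (forall i, i \in r -> holds C e (F i)) (holds C e (FBigAnd (map F r))).
Proof. by rewrite holds_bigand all_map; exact: allP. Qed.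

Lemma holds_bigorP C e (I : eqType) (F : I -> formula) (r : seq I) :
  reflect (exists2 i, i \in r & holds C e (F i)) (holds C e (FBigOr (map F r))).
Proof. by rewrite holds_bigor has_map; exact: hasP. Qed.

Lemma holds_bigand_iotaP C e (F : nat -> formula) n :
  reflect (forall s, s < n -> holds C e (F s)) (holds C e (FBigAnd [seq F s | s <- iota 0 n])).
Proof.
apply: (iffP (holds_bigandP _ _ _ _)) => H s; first by move=> Hs; apply: H; rewrite mem_iota.
by rewrite mem_iota => /H.
Qed.

Lemma holds_bigor_iotaP C e (F : nat -> formula) n :
  reflect (exists2 s, s < n & holds C e (F s)) (holds C e (FBigOr [seq F s | s <- iota 0 n])).
Proof.
by apply: (iffP (holds_bigorP _ _ _ _)) => -[s Hs HF]; exists s; rewrite ?mem_iota in Hs *.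
Qed.

Definition holdsE :=
  (holds_and, holds_eq, holds_le, holds_or, holds_imp, holds_iff, holds_bigand, holds_bigor).

(** * Uniform continuity *)

Lemma agree_trans (S : Type) (x y z : config S) r :
  agree x y r -> agree y z r -> agree x z r.
Proof. by move=> H1 H2 i Hi; rewrite H1 // H2. Qed.

Lemma agree_le (S : Type) (x y : config S) r r' : r' <= r -> agree x y r -> agree x y r'.
Proof. by move=> Hr H i Hi; apply: H; lia. Qed.

Lemma finite_pigeonhole (I : finType) (Q : I -> nat -> Prop) :
  (forall i m m', m' <= m -> Q i m -> Q i m') ->
  (forall m, exists i, Q i m) -> exists i, forall m, Q i m.
Proof.
move=> Qanti HQ; apply: NNPP => /not_ex_all_not noQ.
have [M HM] : exists M, forall i, i \in enum I -> ~ Q i M.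
  elim: (enum I) => [|i s [M HM]]; first by exists 0.
  have [m Hm] := not_all_ex_not _ _ (noQ i).
  exists (maxn m M) => j; rewrite inE => /orP [/eqP -> | /HM Hj] Hq.
  - by apply: Hm; apply: Qanti Hq; rewrite leq_maxl.
  - by apply: Hj; apply: Qanti Hq; rewrite leq_maxr.
by have [i] := HQ M; apply: HM; rewrite mem_enum.
Qed.

Lemma dependent_choice (T : Type) (P : nat -> T -> Prop) (R : nat -> T -> T -> Prop) x0 :
  P 0 x0 -> (forall n x, P n x -> exists y, R n x y /\ P n.+1 y) ->
  exists xs : nat -> T, forall n, P n (xs n) /\ R n (xs n) (xs n.+1).
Proof.
move=> P0 HP.
pose next n x := epsilon (inhabits x) (fun y => R n x y /\ P n.+1 y).
pose fix xs n := if n is n'.+1 then next n' (xs n') else x0.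
have next_spec n x : P n x -> R n x (next n x) /\ P n.+1 (next n x).
  by move=> Hx; exact: (epsilon_spec (inhabits x) (fun y => R n x y /\ P n.+1 y) (HP n x Hx)).
have Pxs n : P n (xs n) by elim: n => //= n IHn; case: (next_spec _ _ IHn).
by exists xs => n; split; [exact: Pxs | case: (next_spec _ _ (Pxs n))].
Qed.

Lemma agree_chain_limit (S : Type) (xs : nat -> config S) :
  (forall n, agree (xs n) (xs n.+1) n) -> exists x, forall n, agree x (xs n) n.
Proof.
move=> Hxs.
have chain j n : j <= n -> agree (xs j) (xs n) j.
  move=> /subnK <-; elim: (n - j) => [|d IHd]; first by [].
  by rewrite addSn; apply: agree_trans IHd (agree_le _ (Hxs _)); rewrite leq_addl.
exists (fun i => xs (Z.abs_nat i) i) => n i Hi.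
by apply: chain; lia.
Qed.

Definition unstable (S : Type) (f : config S -> config S) (n : nat) (x : config S) (m : nat) :
  Prop :=
  exists y1 y2, [/\ agree x y1 n, agree x y2 n, agree y1 y2 m & f y1 0%Z <> f y2 0%Z].

Lemma unstable_le (S : Type) f n (x : config S) m m' :
  m' <= m -> unstable f n x m -> unstable f n x m'.
Proof. by move=> Hm [y1 [y2 [H1 H2 H3 H4]]]; exists y1, y2; split=> //; exact: agree_le H3. Qed.

Section Unstable.
Variables (S : finType) (f : config S -> config S).

Lemma unstable_init :
  (forall r, exists y1 y2, agree y1 y2 r /\ f y1 0%Z <> f y2 0%Z) ->
  exists x, forall m, unstable f 0 x m.
Proof.
move=> Hf.
have [a Ha] : exists a : S, forall m, unstable f 0 (fun=> a) m.
  apply: finite_pigeonhole => [a m m'|m]; first exact: unstable_le.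
  have [y1 [y2 [H12 Hne]]] := Hf m; exists (y1 0%Z), y1, y2.
  have A : agree (fun=> y1 0%Z) y1 0 by move=> i Hi; rewrite (_ : i = 0%Z) //; lia.
  by split=> //; apply: agree_trans A (agree_le (leq0n m) H12).
by exists (fun=> a).
Qed.

Definition set_rim (x : config S) (n : nat) (a b : S) : config S := fun i =>
  if (i =? - Z.of_nat n.+1)%Z then a else if (i =? Z.of_nat n.+1)%Z then b else x i.

Lemma agree_set_rim x n a b : agree x (set_rim x n a b) n.
Proof.
move=> i Hi; rewrite /set_rim.
case: (Z.eqb_spec i (- Z.of_nat n.+1)) => [?|_]; first by exfalso; lia.
by case: (Z.eqb_spec i (Z.of_nat n.+1)) => [?|_] //; exfalso; lia.
Qed.

Lemma unstable_extend n x :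
  (forall m, unstable f n x m) -> exists x', agree x x' n /\ forall m, unstable f n.+1 x' m.
Proof.
move=> Hx.
have [[a b] Hab] : exists ab : S * S, forall m, unstable f n.+1 (set_rim x n ab.1 ab.2) m.
  apply: finite_pigeonhole => [ab m m'|m]; first exact: unstable_le.
  have [y1 [y2 [H1 H2 H12 Hne]]] := Hx (maxn m n.+1).
  exists (y1 (- Z.of_nat n.+1)%Z, y1 (Z.of_nat n.+1)), y1, y2 => /=.
  have A : agree (set_rim x n (y1 (- Z.of_nat n.+1)%Z) (y1 (Z.of_nat n.+1))) y1 n.+1.
    move=> i Hi; rewrite /set_rim.
    case: (Z.eqb_spec i (- Z.of_nat n.+1)) => [->|?] //.
    by case: (Z.eqb_spec i (Z.of_nat n.+1)) => [->|?] //; apply: H1; lia.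
  split => //; first by apply: agree_trans A (agree_le _ H12); rewrite leq_maxr.
  by apply: agree_le H12; rewrite leq_maxl.
by exists (set_rim x n a b); split => //; exact: agree_set_rim.
Qed.

Lemma uniform_radius :
  prod_continuous f -> exists rho, forall x y, agree x y rho -> f x 0%Z = f y 0%Z.
Proof.
move=> Hc; apply: NNPP => Hrho.
have Hf r : exists y1 y2, agree y1 y2 r /\ f y1 0%Z <> f y2 0%Z.
  apply: NNPP => Hr; apply: Hrho; exists r => y1 y2 H12.
  by apply: NNPP => Hne; apply: Hr; exists y1, y2.
(* Koenig's lemma: nested unstable windows converge to a point where [f] is discontinuous. *)
have [x0 Hx0] := unstable_init Hf.
have [xs Hxs] := dependent_choice Hx0 unstable_extend.
have [x Hx] := agree_chain_limit (fun n => proj2 (Hxs n)).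
have [r Hr] := Hc x 0%Z.
have [y1 [y2 [H1 H2 _]]] := proj1 (Hxs r) 0; apply.
by rewrite (Hr y1) ?(Hr y2) //; apply: agree_trans (Hx r) _.
Qed.

End Unstable.

(** * Local rules *)

Lemma ca_translate (S : Type) (f : config S -> config S) :
  (forall (x : config S) (i : Z), f (Defs.shift x) i = Defs.shift (f x) i) ->
  forall (i : Z) (x : config S), f x i = f (fun t => x (t + i)%Z) 0%Z.
Proof.
move=> Hf; apply: Z.peano_ind => [|i IHi|i IHi] x.
- by congr f; apply: functional_extensionality => t; rewrite Z.add_0_r.
- rewrite -Z.add_1_r -[f x _]/(Defs.shift (f x) i) -Hf IHi.
  by congr f; apply: functional_extensionality => t; rewrite /Defs.shift Z.add_assoc.
- rewrite {1}(_ : x = Defs.shift (fun t => x (t - 1)%Z)); last first.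
    by apply: functional_extensionality => t; rewrite /Defs.shift Z.add_simpl_r.
  rewrite Hf /Defs.shift (_ : (Z.pred i + 1 = i)%Z) ?IHi; last lia.
  by congr f; apply: functional_extensionality => t; congr x; lia.
Qed.

Definition window (S : Type) (rho : nat) (c : config S) (i : Z) :
  ((rho + rho).+1).-tuple S :=
  [tuple c (i + Z.of_nat j - Z.of_nat rho)%Z | j < (rho + rho).+1].

(* Outside the window [fill p] takes the junk value [tnth p ord0], which a rule of
   radius [rho] never reads. *)
Definition fill (S : Type) (rho : nat) (p : ((rho + rho).+1).-tuple S) : config S :=
  fun i => tnth p (inord (Z.to_nat (i + Z.of_nat rho))).

Definition local_rule (S : Type) (f : config S -> config S) (rho : nat)
  (p : ((rho + rho).+1).-tuple S) : S := f (fill p) 0%Z.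
Arguments local_rule {S} f rho p.

Lemma ca_local_rule (S : Type) (f : config S -> config S) rho :
  (forall (x : config S) (i : Z), f (Defs.shift x) i = Defs.shift (f x) i) ->
  (forall x y, agree x y rho -> f x 0%Z = f y 0%Z) ->
  forall c i, f c i = local_rule f rho (window rho c i).
Proof.
move=> Hf Hrho c i; rewrite (ca_translate Hf) /local_rule; apply: Hrho => t Ht.
by rewrite /fill tnth_mktuple inordK; [congr c | apply/ltP]; lia.
Qed.

(** * Oracles describing a space-time diagram *)

(* Twice the Cantor pairing function, which avoids a division. *)
Definition pair (x y : nat) : nat := (x + y) * (x + y + 1) + 2 * y.

Lemma pair_inj x y x' y' : pair x y = pair x' y' -> x = x' /\ y = y'.
Proof.
rewrite /pair => E.
have lt_pair a b a' b' : a + b < a' + b' ->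
    (a + b) * (a + b + 1) + 2 * b < (a' + b') * (a' + b' + 1) + 2 * b' by move=> ?; nia.
have Hs : x + y = x' + y'.
  by case: (ltngtP (x + y) (x' + y')) => // /lt_pair; rewrite E ltnn.
by move: E; rewrite Hs => /addnI /eqP; rewrite eqn_mul2l /= => /eqP Hy; split; lia.
Qed.

Definition tpair (a b : term) : term :=
  TAdd (TMul (TAdd a b) (TAdd (TAdd a b) (TNat 1))) (TMul (TNat 2) b).

(* The oracle stores three relations, told apart by the first component of the key:
   [cell_key t a b s]: the cell (t, a - b) of the space-time diagram carries the symbol
   of index [s]; [return_key n r k]: k >= n is a return time to the r-window;
   [suffix_key j v]: v is the code of the suffix of the word from position j on. *)
Definition cell_key t a b s := pair 0 (pair t (pair a (pair b s))).
Definition return_key n r k := pair 1 (pair n (pair r k)).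
Definition suffix_key j v := pair 2 (pair j v).

Definition cell_fm t a b s := FOracle (tpair (TNat 0) (tpair t (tpair a (tpair b s)))).
Definition return_fm n r k := FOracle (tpair (TNat 1) (tpair n (tpair r k))).
Definition suffix_fm j v := FOracle (tpair (TNat 2) (tpair j v)).

Section KeyFormulas.
Variables (C : nat -> bool) (e : seq nat).

Lemma holds_cell t a b s : holds C e (cell_fm t a b s) =
  C (cell_key (term_val e t) (term_val e a) (term_val e b) (term_val e s)).
Proof. by []. Qed.

Lemma holds_return n r k : holds C e (return_fm n r k) =
  C (return_key (term_val e n) (term_val e r) (term_val e k)).
Proof. by []. Qed.

Lemma holds_suffix j v : holds C e (suffix_fm j v) =
  C (suffix_key (term_val e j) (term_val e v)).
Proof. by []. Qed.

End KeyFormulas.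

Definition keyE := (holds_cell, holds_return, holds_suffix).

Definition idx (S : finType) (c : S) : nat := enum_rank c.

Lemma idx_inj (S : finType) : injective (@idx S).
Proof. by move=> c d /val_inj /enum_rank_inj. Qed.

Lemma idx_lt (S : finType) (c : S) : idx c < #|S|.
Proof. exact: ltn_ord. Qed.

Section Constraints.
Variables (S : finType) (rho : nat) (Phi : ((rho + rho).+1).-tuple S -> S).
Local Notation N := #|S|.

Section Semantics.
Variable C : nat -> bool.

Definition one_symbol t a b :=
  (exists2 s, s < N & C (cell_key t a b s)) /\
  (forall s s', s < N -> s' < N -> C (cell_key t a b s) -> C (cell_key t a b s') -> s = s').

Definition shift_invariant t a b :=
  forall s, s < N -> C (cell_key t a b s) = C (cell_key t a.+1 b.+1 s).

Definition obeys_rule t a b :=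
  forall p : ((rho + rho).+1).-tuple S,
    (forall j : 'I_(rho + rho).+1, C (cell_key t (a + j) (b + rho) (idx (tnth p j)))) ->
    C (cell_key t.+1 (a + rho) (b + rho) (idx (Phi p))).

Definition returns n r k d :=
  C (return_key n r k) -> d <= r -> n <= k /\
  forall s, s < N -> C (cell_key k d 0 s) = C (cell_key 0 d 0 s) /\
                    C (cell_key k 0 d s) = C (cell_key 0 0 d s).

Definition suffix_step j v v' :=
  C (suffix_key j v) -> C (suffix_key j.+1 v') ->
  v = 0 \/ exists2 s, s < N & C (cell_key 0 j 0 s) /\ v = s.+1 + N * v'.

(* [C] describes the space-time diagram of a configuration [y] (rows [t], columns in Z),
   return times of [y] to each of its windows, and a word of code [n] read off row 0. *)
Record diagram_oracle (n : nat) : Prop := DiagramOracle {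
  oracle_one_symbol : forall t a b, one_symbol t a b;
  oracle_shift_invariant : forall t a b, shift_invariant t a b;
  oracle_obeys_rule : forall t a b, obeys_rule t a b;
  oracle_returns : forall n r k d, returns n r k d;
  oracle_return_ex : forall n r, exists k, C (return_key n r k);
  oracle_suffix_step : forall j v v', suffix_step j v v';
  oracle_suffix_ex : forall j, exists v, C (suffix_key j v);
  oracle_suffix0 : C (suffix_key 0 n)
}.

End Semantics.

Definition one_symbol_fm T A B :=
  FAnd (FBigOr [seq cell_fm T A B (TNat s) | s <- iota 0 N])
       (FBigAnd [seq FImp (FAnd (cell_fm T A B (TNat s)) (cell_fm T A B (TNat s')))
                          (FEq (TNat s) (TNat s')) | s <- iota 0 N, s' <- iota 0 N]).

Definition shift_invariant_fm T A B :=
  FBigAnd [seq FIff (cell_fm T A B (TNat s))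
                    (cell_fm T (TAdd A (TNat 1)) (TAdd B (TNat 1)) (TNat s)) | s <- iota 0 N].

Definition obeys_rule_fm T A B :=
  FBigAnd [seq FImp (FBigAnd [seq cell_fm T (TAdd A (TNat j)) (TAdd B (TNat rho))
                                          (TNat (idx (tnth p j)))
                             | j : 'I_(rho + rho).+1 <- enum 'I_(rho + rho).+1])
                    (cell_fm (TAdd T (TNat 1)) (TAdd A (TNat rho)) (TAdd B (TNat rho))
                             (TNat (idx (Phi p))))
          | p : ((rho + rho).+1).-tuple S <- enum {: ((rho + rho).+1).-tuple S}].

Definition returns_fm Nt R K D :=
  FImp (FAnd (return_fm Nt R K) (FLe D R))
       (FAnd (FLe Nt K)
          (FBigAnd [seq FAnd (FIff (cell_fm K D (TNat 0) (TNat s))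
                                   (cell_fm (TNat 0) D (TNat 0) (TNat s)))
                             (FIff (cell_fm K (TNat 0) D (TNat s))
                                   (cell_fm (TNat 0) (TNat 0) D (TNat s)))
                   | s <- iota 0 N])).

Definition suffix_step_fm J V V' :=
  FImp (FAnd (suffix_fm J V) (suffix_fm (TAdd J (TNat 1)) V'))
       (FOr (FEq V (TNat 0))
            (FBigOr [seq FAnd (cell_fm (TNat 0) J (TNat 0) (TNat s))
                              (FEq V (TAdd (TNat s.+1) (TMul (TNat N) V'))) | s <- iota 0 N])).

Section Reflection.
Variables (C : nat -> bool) (e : seq nat).

Lemma holds_one_symbol T A B :
  holds C e (one_symbol_fm T A B) <->
  one_symbol C (term_val e T) (term_val e A) (term_val e B).
Proof.
rewrite /one_symbol_fm holds_and; split.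
  case/andP => /holds_bigor_iotaP [s0 Hs0 HC]; rewrite holds_bigand => /all_allpairsP H.
  split; first by exists s0.
  move=> s s' Hs Hs' H1 H2; apply/eqP.
  by have := H s s'; rewrite !mem_iota Hs Hs' !holdsE !keyE H1 H2; apply.
case=> [[s0 Hs0 HC] H]; apply/andP; split; first by apply/holds_bigor_iotaP; exists s0.
rewrite holds_bigand; apply/all_allpairsP => s s'; rewrite !mem_iota => Hs Hs'.
by rewrite !holdsE !keyE; apply/implyP => /andP [H1 H2]; rewrite (H s s').
Qed.

Lemma holds_shift_invariant T A B :
  holds C e (shift_invariant_fm T A B) <->
  shift_invariant C (term_val e T) (term_val e A) (term_val e B).
Proof.
rewrite /shift_invariant_fm; split.
  by move=> /holds_bigand_iotaP H s /H; rewrite !holdsE !keyE /= !addn1 => /eqP.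
by move=> H; apply/holds_bigand_iotaP => s /H; rewrite !holdsE !keyE /= !addn1 => ->.
Qed.

Lemma holds_obeys_rule T A B :
  holds C e (obeys_rule_fm T A B) <->
  obeys_rule C (term_val e T) (term_val e A) (term_val e B).
Proof.
rewrite /obeys_rule_fm; split.
  move=> /holds_bigandP H p Hp; have := H p; rewrite mem_enum => /(_ isT).
  rewrite holds_imp !keyE /= addn1 => /implyP; apply.
  by apply/holds_bigandP => j _; rewrite keyE; apply: Hp.
move=> H; apply/holds_bigandP => p _; rewrite holds_imp !keyE /= addn1.
apply/implyP => /holds_bigandP Hp; apply: H => j.
by have := Hp j; rewrite mem_enum keyE; apply.
Qed.

Lemma holds_returns Nt R K D :
  holds C e (returns_fm Nt R K D) <->
  returns C (term_val e Nt) (term_val e R) (term_val e K) (term_val e D).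
Proof.
rewrite /returns_fm holds_imp !holds_and !holds_le !keyE; split.
  move=> /implyP H HK HD.
  have /andP [-> /holds_bigand_iotaP Hs] := H (introT andP (conj HK HD)).
  split=> // s /Hs; rewrite !holdsE !keyE.
  by case/andP => /eqP -> /eqP ->.
move=> H; apply/implyP => /andP [HK HD]; have [-> Hs] := H HK HD.
apply/holds_bigand_iotaP => s /Hs [E1 E2].
by rewrite !holdsE !keyE E1 E2 !eqxx.
Qed.

Lemma holds_suffix_step J V V' :
  holds C e (suffix_step_fm J V V') <->
  suffix_step C (term_val e J) (term_val e V) (term_val e V').
Proof.
rewrite /suffix_step_fm holds_imp holds_and holds_or holds_eq !keyE /= addn1; split.
  move=> /implyP H HV HV'; have /orP [/eqP ->|] := H (introT andP (conj HV HV')).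
    by left.
  move=> /holds_bigor_iotaP [s Hs].
  by rewrite !holdsE keyE => /andP [HC /eqP ->]; right; exists s.
move=> H; apply/implyP => /andP [HV HV']; case: (H HV HV') => [->|[s Hs [HC Ev]]].
  by rewrite eqxx.
apply/orP; right; apply/holds_bigor_iotaP; exists s => //.
by rewrite holds_and holds_eq keyE HC Ev; apply/eqP.
Qed.

End Reflection.
End Constraints.

(** * The Sigma^1_1 normal form *)

Lemma bounded_witnesses (P : nat -> nat -> Prop) :
  (forall a, exists k, P a k) ->
  forall m, exists L, forall a, a < m -> exists2 k, k < L & P a k.
Proof.
move=> HP; elim=> [|m [L HL]]; first by exists 0.
have [k Hk] := HP m; exists (maxn L k.+1) => a.
rewrite ltnS leq_eqVlt => /predU1P [->|/HL [k' Hk' Pk']].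
  by exists k; rewrite // leq_max ltnSn orbT.
by exists k'; rewrite // leq_max Hk'.
Qed.

Lemma bounded_witnesses2 (P : nat -> nat -> nat -> Prop) :
  (forall a b, exists k, P a b k) ->
  forall m, exists L, forall a b, a < m -> b < m -> exists2 k, k < L & P a b k.
Proof.
move=> HP m.
have [L HL] := bounded_witnesses (fun a => bounded_witnesses (HP a) m) m.
exists L => a b /HL [L' HL' /(_ b) HP'] /HP' [k Hk Pk].
by exists k; first exact: ltn_trans HL'.
Qed.

Section NonwanderingFormula.
Variables (S : finType) (rho : nat) (Phi : ((rho + rho).+1).-tuple S -> S).

(* Free variables: [d; b; a; t; m; l; n]; [t, a, b, d] also serve as [n, r, k, d] in
   [returns] and as [j, v, v'] in [suffix_step]. *)
Definition local_constraints_fm : formula :=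
  FAnd (one_symbol_fm S (TVar 3) (TVar 2) (TVar 1))
 (FAnd (shift_invariant_fm S (TVar 3) (TVar 2) (TVar 1))
 (FAnd (obeys_rule_fm Phi (TVar 3) (TVar 2) (TVar 1))
 (FAnd (returns_fm S (TVar 3) (TVar 2) (TVar 1) (TVar 0))
 (FAnd (suffix_step_fm S (TVar 3) (TVar 2) (TVar 1))
       (suffix_fm (TNat 0) (TVar 6)))))).

(* Free variables: [m; l; n]: the constraints hold below [m], and for [a, b < m] the
   witnesses [k, v] of [return_key a b k] and [suffix_key a v] lie below [l]. *)
Definition nonwandering_fm : formula :=
  FAnd (FAll (TVar 0) (FAll (TVar 1) (FAll (TVar 2) (FAll (TVar 3) local_constraints_fm))))
       (FAll (TVar 0) (FAll (TVar 1) (FEx (TVar 3) (FEx (TVar 4)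
          (FAnd (return_fm (TVar 3) (TVar 2) (TVar 1)) (suffix_fm (TVar 3) (TVar 0))))))).

Lemma holds_local_constraints C t a b d m l n :
  holds C [:: d; b; a; t; m; l; n] local_constraints_fm <->
  [/\ one_symbol S C t a b, shift_invariant S C t a b, obeys_rule Phi C t a b,
      returns S C t a b d & suffix_step S C t a b /\ C (suffix_key 0 n)].
Proof.
rewrite /local_constraints_fm !holds_and keyE; split.
  case/and5P => /holds_one_symbol H1 /holds_shift_invariant H2 /holds_obeys_rule H3.
  by move=> /holds_returns H4 /andP [/holds_suffix_step H5 H6].
case=> H1 H2 H3 H4 [H5 H6]; apply/and5P; split.
- exact/holds_one_symbol.
- exact/holds_shift_invariant.
- exact/holds_obeys_rule.
- exact/holds_returns.
- by apply/andP; split; [exact/holds_suffix_step|].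
Qed.

Lemma diagram_oracle_of_holds C n :
  (forall m, exists l, holds C [:: m; l; n] nonwandering_fm) -> diagram_oracle Phi C n.
Proof.
move=> H.
have local t a b d : exists m l, holds C [:: d; b; a; t; m; l; n] local_constraints_fm.
  set M := (t + a + b + d).+1.
  have [l] := H M; rewrite holds_and => /andP [Hall _].
  have [Ht Ha Hb Hd] : [/\ t < M, a < M, b < M & d < M] by split; lia.
  exists M, l.
  exact: (holds_all_at (holds_all_at (holds_all_at (holds_all_at Hall Ht) Ha) Hb) Hd).
have witnesses a b : exists k v, C (return_key a b k) /\ C (suffix_key a v).
  set M := (a + b).+1.
  have [l] := H M; rewrite holds_and => /andP [_ Hex].
  have [Ha Hb] : a < M /\ b < M by split; lia.
  have /holds_exP [k _ /holds_exP [v _]] := holds_all_at (holds_all_at Hex Ha) Hb.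
  by rewrite holds_and !keyE => /andP [Hk Hv]; exists k, v.
split=> [t a b | t a b | t a b | n' r k d | n' r | j v v' | j |].
all: try by have [m [l /holds_local_constraints []]] := local t a b 0.
- by have [m [l /holds_local_constraints []]] := local n' r k d.
- by have [k [v []]] := witnesses n' r; exists k.
- by have [m [l /holds_local_constraints [_ _ _ _ []]]] := local j v v' 0.
- by have [k [v []]] := witnesses j 0; exists v.
- by have [m [l /holds_local_constraints [_ _ _ _ []]]] := local 0 0 0 0.
Qed.

Lemma holds_of_diagram_oracle C n :
  diagram_oracle Phi C n -> forall m, exists l, holds C [:: m; l; n] nonwandering_fm.
Proof.
move=> HC m.
have [Lk HLk] := bounded_witnesses2 (oracle_return_ex HC) m.
have [Lv HLv] := bounded_witnesses (oracle_suffix_ex HC) m.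
exists (maxn Lk Lv); rewrite holds_and; apply/andP; split.
  do 4 apply/holds_allP => ? _.
  apply/holds_local_constraints; split; last split.
  - exact: (oracle_one_symbol HC).
  - exact: (oracle_shift_invariant HC).
  - exact: (oracle_obeys_rule HC).
  - exact: (oracle_returns HC).
  - exact: (oracle_suffix_step HC).
  - exact: (oracle_suffix0 HC).
apply/holds_allP => a Ha; apply/holds_allP => b Hb.
have [k Hk Pk] := HLk a b Ha Hb; have [v Hv Pv] := HLv a Ha.
apply/holds_exP; exists k; first by rewrite /= leq_max Hk.
apply/holds_exP; exists v; first by rewrite /= leq_max Hv orbT.
by rewrite holds_and !keyE Pk Pv.
Qed.

End NonwanderingFormula.

(** * Nonwandering configurations and oracles *)

Definition decb (P : Prop) : bool := if excluded_middle_informative P then true else false.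

Lemma decbP (P : Prop) : decb P <-> P.
Proof. by rewrite /decb; case: excluded_middle_informative. Qed.

Section Encoding.
Variables (S : finType) (f : config S -> config S) (rho : nat).
Hypothesis f_shift : forall (x : config S) (i : Z), f (Defs.shift x) i = Defs.shift (f x) i.
Hypothesis f_radius : forall x y, agree x y rho -> f x 0%Z = f y 0%Z.
Variables (y : config S) (w : seq S).
Hypothesis y_nonwandering : nonwandering f y.
Hypothesis w_of_y : w = [seq y (Z.of_nat j) | j <- iota 0 (size w)].

Let z t a b := ssrnat.iter t f y (Z.of_nat a - Z.of_nat b)%Z.

Let oracle (p : nat) : bool := decb
  [\/ exists t a b, p = cell_key t a b (idx (z t a b)),
      exists n r k, p = return_key n r k /\ n <= k /\ agree y (ssrnat.iter k f y) r
    | exists j, p = suffix_key j (word_code (drop j w))].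

Lemma oracle_cell t a b s : oracle (cell_key t a b s) = (s == idx (z t a b)).
Proof.
apply/idP/eqP => [|->]; last by apply/decbP; constructor 1; exists t, a, b.
case/decbP => [[t' [a' [b' /pair_inj [_]]]]
  | [n' [r' [k' [/pair_inj [] //]]]]
  | [j' /pair_inj [] //]].
by move=> /pair_inj [->] /pair_inj [->] /pair_inj [->].
Qed.

Lemma oracle_return n r k :
  oracle (return_key n r k) <-> n <= k /\ agree y (ssrnat.iter k f y) r.
Proof.
split=> [|Hk]; last by apply/decbP; constructor 2; exists n, r, k.
case/decbP => [[t' [a' [b' /pair_inj [] //]]]
  | [n' [r' [k' [/pair_inj [_]]]]]
  | [j' /pair_inj [] //]].
by move=> /pair_inj [->] /pair_inj [-> ->].
Qed.

Lemma oracle_suffix j v : oracle (suffix_key j v) = (v == word_code (drop j w)).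
Proof.
apply/idP/eqP => [|->]; last by apply/decbP; constructor 3; exists j.
case/decbP => [[t' [a' [b' /pair_inj [] //]]]
  | [n' [r' [k' [/pair_inj [] //]]]]
  | [j' /pair_inj [_]]].
by move=> /pair_inj [-> ->].
Qed.

Lemma window_iter t a b p :
  (forall j : 'I_(rho + rho).+1, oracle (cell_key t (a + j) (b + rho) (idx (tnth p j)))) ->
  p = window rho (ssrnat.iter t f y) (Z.of_nat a - Z.of_nat b).
Proof.
move=> Hp; apply: eq_from_tnth => j; rewrite tnth_mktuple.
move: (Hp j); rewrite oracle_cell => /eqP /idx_inj ->; rewrite /z; f_equal; lia.
Qed.

Lemma diagram_oracle_of_nonwandering :
  exists C, diagram_oracle (local_rule f rho) C (word_code w).
Proof.
exists oracle; split.
- move=> t a b; split; first by exists (idx (z t a b)); rewrite ?oracle_cell ?idx_lt.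
  by move=> s s' _ _; rewrite !oracle_cell => /eqP -> /eqP ->.
- by move=> t a b s _; rewrite !oracle_cell /z; do 3 f_equal; lia.
- move=> t a b p /window_iter ->.
  rewrite oracle_cell -(ca_local_rule f_shift f_radius) /z /=.
  by apply/eqP; do 2 f_equal; lia.
- move=> n r k d /oracle_return [Hk Hy] Hd; split=> // s _.
  by rewrite !oracle_cell /z /= -!Hy //; lia.
- by move=> n r; have [k [Hk Hy]] := y_nonwandering n r; exists k; exact/oracle_return.
- move=> j v v'; rewrite /suffix_step !oracle_suffix => /eqP -> /eqP ->.
  case: (ltnP j (size w)) => Hj; last by left; rewrite drop_oversize.
  right; exists (idx (nth (y 0%Z) w j)); first exact: idx_lt.
  rewrite oracle_cell (drop_nth (y 0%Z) Hj); split=> //.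
  by rewrite {1}w_of_y (nth_map 0) ?size_iota // nth_iota // /z /= Z.sub_0_r.
- by move=> j; exists (word_code (drop j w)); rewrite oracle_suffix.
- by rewrite oracle_suffix drop0.
Qed.

End Encoding.

Section Decoding.
Variables (S : finType) (f : config S -> config S) (rho : nat).
Hypothesis f_shift : forall (x : config S) (i : Z), f (Defs.shift x) i = Defs.shift (f x) i.
Hypothesis f_radius : forall x y, agree x y rho -> f x 0%Z = f y 0%Z.
Variables (C : nat -> bool) (n : nat).
Hypothesis HC : diagram_oracle (local_rule f rho) C n.

Lemma cell_symbol_ex t a b : exists c : S, C (cell_key t a b (idx c)).
Proof.
have [[s Hs HCs] _] := oracle_one_symbol HC t a b.
by exists (enum_val (Ordinal Hs)); rewrite /idx enum_valK.
Qed.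

Definition cell_symbol t a b : S := xchoose (cell_symbol_ex t a b).

Lemma cell_symbolP t a b : C (cell_key t a b (idx (cell_symbol t a b))).
Proof. exact: (xchooseP (cell_symbol_ex t a b)). Qed.

Lemma cell_symbol_idx t a b s :
  s < #|S| -> C (cell_key t a b s) -> s = idx (cell_symbol t a b).
Proof.
move=> Hs HCs; have [_ uniq] := oracle_one_symbol HC t a b.
exact: uniq Hs (idx_lt _) HCs (cell_symbolP t a b).
Qed.

Lemma cell_symbol_eq t a b c : C (cell_key t a b (idx c)) -> c = cell_symbol t a b.
Proof. by move/(cell_symbol_idx (idx_lt c))/idx_inj. Qed.

Lemma cell_symbol_shift t a b d : cell_symbol t (a + d) (b + d) = cell_symbol t a b.
Proof.
elim: d => [|d IHd]; first by rewrite !addn0.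
rewrite -IHd !addnS; symmetry; apply: cell_symbol_eq.
by rewrite -(oracle_shift_invariant HC) ?idx_lt ?cell_symbolP.
Qed.

(* Row [t] of the space-time diagram; column [i] is read at [(a, b) = (i^+, i^-)]. *)
Definition diagram t : config S := fun i => cell_symbol t (Z.to_nat i) (Z.to_nat (- i)).

Lemma cell_symbol_diagram t a b :
  cell_symbol t a b = diagram t (Z.of_nat a - Z.of_nat b)%Z.
Proof.
rewrite /diagram -[in RHS](cell_symbol_shift _ _ _ (minn a b)).
by congr cell_symbol; lia.
Qed.

Lemma diagram_succ t : diagram t.+1 = f (diagram t).
Proof.
apply: functional_extensionality => i.
rewrite (ca_local_rule f_shift f_radius) [LHS]/diagram.
set a := Z.to_nat i; set b := Z.to_nat (- i).
rewrite -(cell_symbol_shift _ a b rho); symmetry; apply: cell_symbol_eq.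
apply: (oracle_obeys_rule HC) => j; rewrite tnth_mktuple.
have -> : (i + Z.of_nat j - Z.of_nat rho = Z.of_nat (a + j) - Z.of_nat (b + rho))%Z by lia.
by rewrite -cell_symbol_diagram cell_symbolP.
Qed.

Lemma diagram_iter t : diagram t = ssrnat.iter t f (diagram 0).
Proof. by elim: t => //= t <-; exact: diagram_succ. Qed.

Lemma diagram_nonwandering : nonwandering f (diagram 0).
Proof.
move=> m r; have [k Hk] := oracle_return_ex HC m r.
have [Hmk _] := oracle_returns HC Hk (leq0n r).
exists k; split=> // i Hi; rewrite -diagram_iter.
have Hd : Z.abs_nat i <= r by lia.
have [_ Hret] := oracle_returns HC Hk Hd.
case: (Z_le_gt_dec 0 i) => Hi0.
  rewrite (_ : i = Z.of_nat (Z.abs_nat i) - Z.of_nat 0)%Z; last by lia.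
  rewrite -!cell_symbol_diagram; apply: cell_symbol_eq.
  by rewrite (proj1 (Hret _ (idx_lt _))) cell_symbolP.
rewrite (_ : i = Z.of_nat 0 - Z.of_nat (Z.abs_nat i))%Z; last by lia.
rewrite -!cell_symbol_diagram; apply: cell_symbol_eq.
by rewrite (proj2 (Hret _ (idx_lt _))) cell_symbolP.
Qed.

Lemma diagram_suffix V j v : v <= V -> C (suffix_key j v) ->
  exists2 w : seq S, word_code w = v &
    w = [seq diagram 0 (Z.of_nat (j + i)) | i <- iota 0 (size w)].
Proof.
elim: V j v => [|V IHV] j v Hv Hjv.
  by move: Hv; rewrite leqn0 => /eqP ->; exists [::].
have [v' Hjv'] := oracle_suffix_ex HC j.+1.
case: (oracle_suffix_step HC Hjv Hjv') => [->|[s Hs [Hcell Ev]]]; first by exists [::].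
have [|w Hw Ew] := IHV j.+1 v' _ Hjv'; first by move: Hv; rewrite Ev; nia.
exists (cell_symbol 0 j 0 :: w); first by rewrite /= Hw Ev (cell_symbol_idx Hs Hcell).
rewrite /= addn0 cell_symbol_diagram Z.sub_0_r {1}Ew; congr cons.
rewrite -[1]addn0 iotaDl -map_comp; apply: eq_map => i /=; congr diagram; lia.
Qed.

Lemma nonwandering_word_of_oracle :
  exists w : seq S, word_code w = n /\ language (nonwandering f) w.
Proof.
have [w Hw Ew] := diagram_suffix (leqnn n) (oracle_suffix0 HC).
by exists w; split=> //; exists (diagram 0); split; [exact: diagram_nonwandering|].
Qed.

End Decoding.

Theorem lemma3 (S : finType) (f : config S -> config S)
  (Hf : cellular_automaton f) :
  Sigma11 (fun n : nat =>
    exists w : seq S, word_code w = n /\ language (nonwandering f) w).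
Proof.
have [f_cont f_shift] := Hf.
have [rho f_radius] := uniform_radius f_cont.
exists (formula_pred (nonwandering_fm (local_rule f rho))).
split=> [|n]; first exact: formula_pred_recursive.
split=> [[w [<- [y [Hy Hw]]]] | [C /diagram_oracle_of_holds HC]].
  have [C HC] := diagram_oracle_of_nonwandering f_shift f_radius Hy Hw.
  by exists C; exact: holds_of_diagram_oracle.
exact (nonwandering_word_of_oracle f_shift f_radius HC).
Qed.
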